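(* Let $\mathcal X_{aux}\subset\mathbb R^n$ be a set divided into distinct semantic groups $\mathcal X_{aux}=\mathcal X^{y_1}\cup\cdots\cup\mathcal X^{y_m}$, where each group $\mathcal X^{y_i}$ consists of the points with semantic label $y_i$, and at least two groups with different labels are nonempty. Suppose the following semantic-change assumption holds: there exists $\zeta>0$ such that for any $x_i\in\mathcal X^{y_i}$, $x_j\in\mathcal X^{y_j}$ with $y_i\neq y_j$ and any $\lambda$ with $\zeta<\lambda<1-\zeta$, the point $\hat x=\lambda x_i+(1-\lambda)x_j$ belongs to neither $\mathcal X^{y_i}$ nor $\mathcal X^{y_j}$. Define $$\mathcal G\mathcal X_{aux}=\{\hat x\mid \hat x=\lambda x_1+(1-\lambda)x_2,\ x_1,x_2\in\mathcal X_{aux},\ \lambda\in[0,1]\}.$$ Then $\mathcal X_{aux}\subset\mathcal G\mathcal X_{aux}$ (proper inclusion).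
   Context: $\mathcal X_{aux}$ is the input space of auxiliary outliers used for OOD detection training; $\mathcal G\mathcal X_{aux}$ is the space obtained by applying all mixup transforms (all pairs of points and all interpolation weights $\lambda\in[0,1]$) to it. Semantic labels of points partition $\mathcal X_{aux}$ into the groups $\mathcal X^{y_i}$. *)

From mathcomp Require Import all_boot all_order all_algebra.
From mathcomp Require Import all_classical all_reals.
Set Implicit Arguments. Unset Strict Implicit. Unset Printing Implicit Defensive.
Import Order.TTheory GRing.Theory Num.Theory.
Local Open Scope ring_scope.
Local Open Scope classical_set_scope.

Definition sem_group (R : realType) (n m : nat) (X : set 'rV[R]_n)
  (lab : 'rV[R]_n -> 'I_m) (y : 'I_m) : set 'rV[R]_n :=
  [set x | X x /\ lab x = y].

Definition mixup (R : realType) (n : nat) (lam : R) (x1 x2 : 'rV[R]_n) : 'rV[R]_n :=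
  lam *: x1 + (1 - lam) *: x2.

Definition mixup_space (R : realType) (n : nat) (X : set 'rV[R]_n) : set 'rV[R]_n :=
  [set z | exists x1 x2 lam, [/\ X x1, X x2, 0 <= lam <= 1 & z = mixup lam x1 x2]].

Definition semantic_change (R : realType) (n m : nat) (X : set 'rV[R]_n)
  (lab : 'rV[R]_n -> 'I_m) (zeta : R) : Prop :=
  forall (yi yj : 'I_m) (xi xj : 'rV[R]_n) (lam : R),
    sem_group X lab yi xi -> sem_group X lab yj xj -> yi <> yj ->
    zeta < lam < 1 - zeta ->
    ~ sem_group X lab yi (mixup lam xi xj) /\ ~ sem_group X lab yj (mixup lam xi xj).

From mathcomp Require Import all_boot all_order all_algebra.
From mathcomp Require Import all_classical all_reals.
From mathcomp Require Import ring lra.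
Import Order.TTheory GRing.Theory Num.Theory.
Local Open Scope ring_scope.
Local Open Scope classical_set_scope.

(* If mixing added nothing, X would contain the whole segment between two points
   x_i, x_j with different labels, and the labels along the segment would give a
   colouring h of [0, 1] by finitely many colours, with h 0 <> h 1, such that
   whenever h s <> h t the middle part of [s, t] (cut off by a fraction zeta at
   both ends) avoids the colours h s and h t.  A completeness argument shows that
   such a middle part is never monochromatic, so it contains a smaller pair of
   differently coloured points at which one colour fewer is available; iterating
   exhausts the finitely many colours. *)

Definition in_window {R : numDomainType} (z s t u : R) :=
  s + z * (t - s) < u < t - z * (t - s).

Definition window_separating {R : numDomainType} {T : Type} (z : R) (h : R -> T) :=
  forall s t u, 0 <= s -> s < t -> t <= 1 -> h s <> h t -> in_window z s t u ->
  h u <> h s /\ h u <> h t.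

Lemma midpoint_in_window {R : realFieldType} {z s t : R} :
  z < 2^-1 -> s < t -> in_window z s t ((s + t) / 2).
Proof.
move=> z_lt_half st; have : z * (t - s) < 2^-1 * (t - s) by rewrite ltr_pM2r ?subr_gt0.
by rewrite /in_window => ?; apply/andP; split; lra.
Qed.

Lemma in_window_itv {R : realFieldType} {z s t u : R} :
  0 <= z -> s < t -> in_window z s t u -> s < u < t.
Proof.
move=> z0 st /andP[su ut].
have : 0 <= z * (t - s) by rewrite mulr_ge0 // subr_ge0 ltW.
by move=> ?; apply/andP; split; lra.
Qed.

Section WindowSeparatingColouring.
Context {R : realType} {z : R}.
Hypothesis z_range : 0 < z < 2^-1.

Section AnyColours.
Context {T : Type} {h : R -> T}.
Hypothesis h_sep : window_separating z h.

(* Let [q] be a point of colour other than [c] close to the supremum of such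
   points below the midpoint; the window of [q, mid] then reaches past that
   supremum and must still avoid [c]. *)
Lemma window_not_monochrome {s t c} : 0 <= s -> s < t -> t <= 1 -> h s <> h t ->
  ~ (forall u, in_window z s t u -> h u = c).
Proof.
move=> s0 st t1 hst mono; case/andP: z_range => z0 z_lt_half.
set mid := (s + t) / 2.
have wmid : in_window z s t mid by apply: midpoint_in_window.
have [hms _] := h_sep _ _ _ s0 st t1 hst wmid.
have c_mid : c = h mid by rewrite mono.
have /andP[s_lt_mid mid_lt_t] := in_window_itv (ltW z0) st wmid.
pose S := [set x | s <= x <= mid /\ h x <> c].
have Ss : S s by split; [apply/andP; split; lra | rewrite c_mid => /esym].
have ubS : ubound S (s + z * (t - s)).
  move=> x [/andP[sx xm] hx]; rewrite leNgt; apply/negP => lt.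
  by apply: hx; apply: mono; rewrite /in_window lt /=; case/andP: wmid => _; lra.
have supS : has_sup S by split; [exists s | exists (s + z * (t - s))].
have supS_lt_mid : sup S < mid.
  have := ge_sup (ex_intro _ s Ss) ubS; case/andP: wmid; lra.
have gap : 0 < mid - sup S by rewrite subr_gt0.
have [q Sq q_near] := sup_adherent gap supS.
have q_le := sup_upper_bound supS Sq.
case: Sq => /andP[sq qm] hq.
have q_mid : q < mid by lra.
set u := (q + mid) / 2.
have hq_mid : h q <> h mid by rewrite -c_mid.
have [_ hu] := h_sep _ _ _ (le_trans s0 sq) q_mid (ltW (lt_le_trans mid_lt_t t1))
  hq_mid (midpoint_in_window z_lt_half q_mid).
have : S u by split; [apply/andP; split; rewrite /u; lra | rewrite c_mid].
by move/(sup_upper_bound supS); rewrite /u; lra.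
Qed.

Lemma separated_pair_shrink {s t} : 0 <= s -> s < t -> t <= 1 -> h s <> h t ->
  exists a b, [/\ s < a, a < b, b < t, h a <> h b &
                  forall u, a <= u <= b -> h u <> h s].
Proof.
move=> s0 st t1 hst; case/andP: z_range => z0 z_lt_half.
have [u wu hu] : exists2 u, in_window z s t u & h u <> h ((s + t) / 2).
  apply: contrapT => no_u.
  apply: (window_not_monochrome (c := h ((s + t) / 2)) s0 st t1 hst) => u wu.
  by apply: contrapT => hu; apply: no_u; exists u.
have wmid := midpoint_in_window z_lt_half st.
have inner a b : in_window z s t a -> in_window z s t b -> a < b -> h a <> h b ->
    exists a b, [/\ s < a, a < b, b < t, h a <> h b &
                    forall u, a <= u <= b -> h u <> h s].
  move=> wa wb ab hab; exists a, b.
  have /andP[sa _] := in_window_itv (ltW z0) st wa.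
  have /andP[_ bt] := in_window_itv (ltW z0) st wb.
  split=> // v /andP[av vb].
  have wv : in_window z s t v.
    by move: wa wb; rewrite /in_window => /andP[? _] /andP[_ ?]; apply/andP; split; lra.
  by case: (h_sep _ _ _ s0 st t1 hst wv).
case: (ltgtP u ((s + t) / 2)) => [lt|gt|eq].
- exact: inner wu wmid lt hu.
- by apply: inner wmid wu gt _ => /esym.
- by rewrite eq in hu.
Qed.

End AnyColours.

Section FiniteColours.
Context {T : finType} {h : R -> T}.
Hypothesis h_sep : window_separating z h.

Lemma window_separating_const_on (E : {set T}) s t :
  0 <= s -> s < t -> t <= 1 -> (forall u, s <= u <= t -> h u \in E) -> h s = h t.
Proof.
have [k] := ubnP #|E|; elim: k E s t => // k IH E s t cardE s0 st t1 hE.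
case: (eqVneq (h s) (h t)) => // /eqP hst.
have [a [b [sa ab bt hab hsep_ab]]] := separated_pair_shrink h_sep s0 st t1 hst.
have hsE : h s \in E by apply: hE; apply/andP; split; lra.
exfalso; apply: hab; apply: (IH (E :\ h s)) => //; try lra.
- by move: cardE; rewrite (cardsD1 (h s) E) hsE.
- move=> u /andP[au ub]; rewrite in_setD1 hE; last by apply/andP; split; lra.
  by rewrite andbT; apply/eqP; apply: hsep_ab; rewrite au ub.
Qed.

Lemma window_separating_const {s t} : 0 <= s -> s < t -> t <= 1 -> h s = h t.
Proof.
by move=> s0 st t1; apply: (window_separating_const_on [set: T]%SET) => // u _; apply: in_setT.
Qed.

End FiniteColours.

End WindowSeparatingColouring.

Section Mixup.
Context {R : realType} {n : nat}.
Implicit Types (x y : 'rV[R]_n) (X : set 'rV[R]_n).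

Lemma mixup1 x y : mixup 1 x y = x.
Proof. by rewrite /mixup subrr scale0r addr0 scale1r. Qed.

Lemma mixup0 x y : mixup 0 x y = y.
Proof. by rewrite /mixup subr0 scale0r add0r scale1r. Qed.

Lemma mixup_mixup x y (l s t : R) :
  mixup l (mixup s x y) (mixup t x y) = mixup (l * s + (1 - l) * t) x y.
Proof.
rewrite /mixup !scalerDr !scalerA addrACA -!scalerDl.
by congr (_ *: _ + _ *: _); ring.
Qed.

Lemma sub_mixup_space X : X `<=` mixup_space X.
Proof. by move=> x Xx; exists x, x, 1; rewrite ler01 lexx mixup1. Qed.

(* The point of parameter u on the segment is the mixup of the points of
   parameters s and t with weight (t - u) / (t - s), which lies in
   (z, 1 - z) exactly when u is in the window of [s, t]. *)
Lemma mixup_closed_window_separating {m : nat} {X} {lab : 'rV[R]_n -> 'I_m}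
    {z : R} {xi xj} :
  mixup_space X `<=` X -> X xi -> X xj -> 0 <= z -> semantic_change X lab z ->
  window_separating z (fun u => lab (mixup u xi xj)).
Proof.
move=> closedX Xi Xj z0 hsc s t u s0 st t1 hst wu.
have /andP[su ut] := in_window_itv z0 st wu.
have onX v : 0 <= v <= 1 -> X (mixup v xi xj) by move=> v01; apply: closedX; exists xi, xj, v.
have grp v : 0 <= v <= 1 -> sem_group X lab (lab (mixup v xi xj)) (mixup v xi xj).
  by move=> v01; split; [apply: onX|].
have ts0 : 0 < t - s by rewrite subr_gt0.
pose l := (t - u) / (t - s).
have lu : l * s + (1 - l) * t = u by rewrite /l; field; rewrite gt_eqF.
have l_mid : z < l < 1 - z.
  move: wu => /andP[w1 w2]; rewrite /l ltr_pdivlMr // ltr_pdivrMr //.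
  by apply/andP; split; lra.
have s01 : 0 <= s <= 1 by apply/andP; split; lra.
have t01 : 0 <= t <= 1 by apply/andP; split; lra.
have [not_s not_t] := hsc _ _ _ _ l (grp s s01) (grp t t01) hst l_mid.
have Xu : X (mixup u xi xj) by apply: onX; apply/andP; split; lra.
rewrite mixup_mixup lu in not_s not_t.
by split=> lab_u; [apply: not_s | apply: not_t].
Qed.

End Mixup.

Theorem lemma1 (R : realType) (n m : nat) (X : set 'rV[R]_n)
  (lab : 'rV[R]_n -> 'I_m)
  (two_groups : exists (yi yj : 'I_m), yi <> yj /\
      sem_group X lab yi !=set0 /\ sem_group X lab yj !=set0)
  (hsc : exists zeta : R, 0 < zeta < 2^-1 /\ semantic_change X lab zeta) :
  X `<` mixup_space X.
Proof.
split; first exact: sub_mixup_space.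
move=> closedX.
have [yi [yj [yij [[xi [Xi li]] [xj [Xj lj]]]]]] := two_groups.
have [z [z_range sc]] := hsc.
have z0 : 0 <= z by case/andP: z_range => /ltW.
have h_sep := mixup_closed_window_separating closedX Xi Xj z0 sc.
have h01 : lab (mixup 0 xi xj) = lab (mixup 1 xi xj).
  by apply: (window_separating_const z_range h_sep); [exact: lexx | exact: ltr01 | exact: lexx].
by apply: yij; rewrite -li -lj -(mixup1 xi xj) -{2}(mixup0 xi xj).
Qed.
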